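(* Let $\mathcal{C}\subset S^{n-1}\subset\mathbb{R}^n$ be a spherical code whose angle set $\mathcal{A}_{\mathcal{C}}$ consists of rational numbers and such that $\mathcal{C}$ spans $\mathbb{R}^n$. Then there exist an integer $q\geq n$, a natural number $m$, a real number $\lambda>0$ and a linear isometric embedding $\iota:\mathbb{R}^n\to\mathbb{R}^q$ such that $\lambda\,\iota(\mathcal{C})\subseteq s_m$, where $s_m$ is the shell of squared norm $m$ of the integer lattice $\mathbb{Z}^q$.
   Context: A spherical code is a finite set of points on the unit sphere $S^{n-1}\subset\mathbb{R}^n$. Its angle set is $\mathcal{A}_{\mathcal{C}}=\{\langle x,y\rangle: x,y\in\mathcal{C},\,x\neq y\}$ (standard inner product). $\mathbb{Z}^q$ is the lattice of integer vectors in $\mathbb{R}^q$, and its shell $s_m$ is $\{v\in\mathbb{Z}^q:\|v\|^2=m\}$. *)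

From mathcomp Require Import all_boot all_order all_algebra.
From mathcomp Require Import reals.
Set Implicit Arguments. Unset Strict Implicit. Unset Printing Implicit Defensive.
Import Order.TTheory GRing.Theory Num.Theory.
Local Open Scope ring_scope.

Definition dotp (R : realType) (n : nat) (u v : 'rV[R]_n) : R := (u *m v^T) 0 0.

Definition on_unit_sphere (R : realType) (n : nat) (x : 'rV[R]_n) : Prop :=
  dotp x x = 1.

(* A spherical code: a finite set of points on the unit sphere (given as a
   duplicate-free list). *)
Definition spherical_code (R : realType) (n : nat) (C : seq 'rV[R]_n) : Prop :=
  uniq C /\ forall x, x \in C -> on_unit_sphere x.

Definition angle_set (R : realType) (n : nat) (C : seq 'rV[R]_n) : R -> Prop :=
  fun a => exists x y, [/\ x \in C, y \in C, x != y & a = dotp x y].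

Definition is_rational (R : realType) (a : R) : Prop := exists r : rat, a = ratr r.

Definition spans (R : realType) (n : nat) (C : seq 'rV[R]_n) : Prop :=
  row_full (\matrix_(i < size C) nth 0 C i).

Definition isometric_embedding (R : realType) (n q : nat) (M : 'M[R]_(n, q)) : Prop :=
  forall u v : 'rV[R]_n, dotp (u *m M) (v *m M) = dotp u v.

Definition in_shell (R : realType) (q m : nat) (w : 'rV[R]_q) : Prop :=
  exists z : 'rV[int]_q, w = map_mx (fun k : int => k%:~R) z /\
    \sum_(i < q) (z 0 i) ^+ 2 = m%:Z.

(** Gram–Schmidt applied to the vectors of C only divides by squared norms
    and inner products, so it yields an orthogonal basis u_1, ..., u_n with
    rational squared norms and rational inner products against C.  With t a
    common denominator of the |u_i|^2, the identity decomposes as the sum of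
    the rank-one projectors u_i^T u_i / |u_i|^2, and each of these is the sum
    of t^2 |u_i|^2 (an integer) copies of f^T f with f = u_i / (t |u_i|^2).
    Listing all these vectors f as the columns of M gives M M^T = 1, i.e. an
    isometric embedding, and the coordinates <x, f> of x M are rational for
    x in C.  Clearing a common denominator D puts D (x M) in Z^q, with squared
    norm D^2. *)
From mathcomp Require Import all_boot all_order all_algebra.
From mathcomp Require Import reals ring.
Set Implicit Arguments. Unset Strict Implicit. Unset Printing Implicit Defensive.
Import GRing.Theory Num.Theory.
Local Open Scope ring_scope.

Section DotProduct.
Variables (R : realType) (n : nat).
Implicit Types (u v w : 'rV[R]_n).

Lemma dotpE u v : dotp u v = \sum_i u 0 i * v 0 i.
Proof. by rewrite /dotp mxE; apply: eq_bigr => i _; rewrite mxE. Qed.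

Lemma dotpC u v : dotp u v = dotp v u.
Proof. by rewrite !dotpE; apply: eq_bigr => i _; rewrite mulrC. Qed.

Lemma dotpDl u v w : dotp (u + v) w = dotp u w + dotp v w.
Proof. by rewrite /dotp mulmxDl mxE. Qed.

Lemma dotpZl a u v : dotp (a *: u) v = a * dotp u v.
Proof. by rewrite /dotp -scalemxAl mxE. Qed.

Lemma dotpBl u v w : dotp (u - v) w = dotp u w - dotp v w.
Proof. by rewrite dotpDl -scaleN1r dotpZl mulN1r. Qed.

Lemma dotp_suml (I : Type) (s : seq I) (F : I -> 'rV[R]_n) w :
  dotp (\sum_(i <- s) F i) w = \sum_(i <- s) dotp (F i) w.
Proof. by rewrite /dotp mulmx_suml summxE. Qed.

Lemma dotpZr a u v : dotp u (a *: v) = a * dotp u v.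
Proof. by rewrite dotpC dotpZl dotpC. Qed.

Lemma dotpBr u v w : dotp u (v - w) = dotp u v - dotp u w.
Proof. by rewrite dotpC dotpBl !(dotpC u). Qed.

Lemma dotp_sumr (I : Type) (s : seq I) (F : I -> 'rV[R]_n) w :
  dotp w (\sum_(i <- s) F i) = \sum_(i <- s) dotp w (F i).
Proof. by rewrite dotpC dotp_suml; apply: eq_bigr => i _; rewrite dotpC. Qed.

Lemma dotp_ge0 u : 0 <= dotp u u.
Proof. by rewrite dotpE sumr_ge0 // => i _; rewrite -expr2 sqr_ge0. Qed.

Lemma dotp_eq0 u : (dotp u u == 0) = (u == 0).
Proof.
apply/idP/idP => [|/eqP->]; last by rewrite /dotp mul0mx mxE.
rewrite dotpE psumr_eq0 => [/allP u0|i _]; last by rewrite -expr2 sqr_ge0.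
apply/eqP/rowP => i; rewrite mxE.
by have /(_ (mem_index_enum i)) := u0 i; rewrite -expr2 sqrf_eq0 => /eqP.
Qed.

Lemma mul_row_tr u v : u *m v^T = (dotp u v)%:M.
Proof. exact: mx11_scalar. Qed.

Lemma isometric_embedding_tr (q : nat) (M : 'M[R]_(n, q)) :
  M *m M^T = 1%:M -> isometric_embedding M.
Proof. by move=> MMt u v; rewrite /dotp trmx_mul !mulmxA -(mulmxA u) MMt mulmx1. Qed.

End DotProduct.

Section Rationals.
Variable R : realType.
Implicit Types a b : R.

Lemma rationalD a b : is_rational a -> is_rational b -> is_rational (a + b).
Proof. by move=> [r ->] [s ->]; exists (r + s); rewrite rmorphD. Qed.

Lemma rationalN a : is_rational a -> is_rational (- a).
Proof. by move=> [r ->]; exists (- r); rewrite rmorphN. Qed.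

Lemma rationalM a b : is_rational a -> is_rational b -> is_rational (a * b).
Proof. by move=> [r ->] [s ->]; exists (r * s); rewrite rmorphM. Qed.

Lemma rationalV a : is_rational a -> is_rational a^-1.
Proof. by move=> [r ->]; exists r^-1; rewrite fmorphV. Qed.

Lemma rational_nat (k : nat) : is_rational (k%:R : R).
Proof. by exists k%:R; rewrite ratr_nat. Qed.

Lemma rational_sum (I : eqType) (s : seq I) (F : I -> R) :
  {in s, forall i, is_rational (F i)} -> is_rational (\sum_(i <- s) F i).
Proof.
elim: s => [|i s IHs] Fs; first by rewrite big_nil; apply: (rational_nat 0).
rewrite big_cons; apply: rationalD; first by apply: Fs; rewrite mem_head.
by apply: IHs => j js; apply: Fs; rewrite inE js orbT.
Qed.

Lemma rational_common_denominator (S : seq R) :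
  {in S, forall a, is_rational a} ->
  exists2 D : nat, (0 < D)%N & {in S, forall a, exists z : int, D%:R * a = z%:~R}.
Proof.
elim: S => [|b S IHS] SQ; first by exists 1%N.
have [|D D0 DS] := IHS; first by move=> a aS; apply: SQ; rewrite inE aS orbT.
have [r ->] := SQ b (mem_head _ _).
have dr : (`|denq r|%N%:R : R) = (denq r)%:~R.
  by rewrite natr_absz gtr0_norm // denq_gt0.
have dr0 : (denq r)%:~R != 0 :> R by rewrite intr_eq0 denq_neq0.
exists (D * `|denq r|)%N; first by rewrite muln_gt0 D0 absz_gt0 denq_neq0.
move=> a; rewrite inE => /orP[/eqP->|aS].
  exists (D%:Z * numq r); rewrite /ratr natrM dr intrM.
  by rewrite -mulrA [_ * (_ / _)]mulrC mulfVK.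
by have [z Dz] := DS a aS; exists (z * denq r); rewrite natrM dr mulrAC Dz intrM.
Qed.

End Rationals.

Section Projection.
Variables (R : realType) (n : nat).
Implicit Types (x w : 'rV[R]_n) (U : seq 'rV[R]_n).

(* Orthogonal projection onto the span of U, valid when U is an orthogonal
   family of nonzero vectors. *)
Definition proj U : 'M[R]_n := \sum_(u <- U) (dotp u u)^-1 *: (u^T *m u).

Definition orthogonal_family U :=
  {in U, forall u, dotp u u != 0} /\ pairwise (fun u v => dotp u v == 0) U.

Lemma mul_proj x U : x *m proj U = \sum_(u <- U) (dotp x u / dotp u u) *: u.
Proof.
rewrite /proj mulmx_sumr; apply: eq_bigr => u _.
by rewrite -scalemxAr mulmxA mul_row_tr mul_scalar_mx scalerA mulrC.
Qed.

Lemma proj_cons x w U :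
  x *m proj (w :: U) = (dotp x w / dotp w w) *: w + x *m proj U.
Proof. by rewrite !mul_proj big_cons. Qed.

Lemma dotp_proj_orth x w U :
  {in U, forall u, dotp u w = 0} -> dotp (x *m proj U) w = 0.
Proof.
move=> Uw; rewrite mul_proj dotp_suml big_seq big1 // => u uU.
by rewrite dotpZl Uw ?mulr0.
Qed.

Lemma dotp_proj x U u :
  orthogonal_family U -> u \in U -> dotp (x *m proj U) u = dotp x u.
Proof.
move=> []; elim: U => [//|v U IHU] U0.
rewrite pairwise_cons => /andP[/allP vU orthU]; rewrite proj_cons dotpDl dotpZl.
rewrite inE; case: (eqVneq u v) => [->|uv] /= uU.
  rewrite mulfVK ?U0 ?mem_head // dotp_proj_orth ?addr0 // => w /vU/eqP.
  by rewrite dotpC.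
rewrite (eqP (vU u uU)) mulr0 add0r IHU // => w wU.
by rewrite U0 // inE wU orbT.
Qed.

Lemma dotp_proj_residue x U u :
  orthogonal_family U -> u \in U -> dotp (x - x *m proj U) u = 0.
Proof. by move=> oU uU; rewrite dotpBl dotp_proj ?subrr. Qed.

End Projection.

Section GramSchmidt.
Variables (R : realType) (n : nat) (C : seq 'rV[R]_n).
Implicit Types U : seq 'rV[R]_n.
Hypothesis gramC : {in C &, forall x y, is_rational (dotp x y)}.

Definition rational_basis_for (U : seq 'rV[R]_n) :=
  [/\ orthogonal_family U, {in U, forall u, is_rational (dotp u u)}
    & {in C & U, forall c u, is_rational (dotp c u)}].

Lemma rational_residue U x c :
  rational_basis_for U -> x \in C -> c \in C ->
  is_rational (dotp c (x - x *m proj U)).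
Proof.
move=> [_ Un UC] xC cC; rewrite dotpBr mul_proj dotp_sumr.
apply: rationalD; first exact: gramC.
apply/rationalN/rational_sum => u uU; rewrite dotpZr.
by apply: rationalM; [apply: rationalM; [exact: UC | exact/rationalV/Un] | exact: UC].
Qed.

Lemma gram_schmidt_step U (x : 'rV[R]_n) :
  rational_basis_for U -> x \in C ->
  exists2 U', rational_basis_for U' &
    x *m proj U' = x /\ forall y : 'rV[R]_n, y *m proj U = y -> y *m proj U' = y.
Proof.
move=> UQ xC; have [[U0 orthU] Un UC] := UQ.
set w := x - x *m proj U.
have wU : {in U, forall u, dotp u w = 0}.
  by move=> u uU; rewrite dotpC dotp_proj_residue.
have ww : dotp w w = dotp x w by rewrite {1}/w dotpBl dotp_proj_orth ?subr0.
have fixed_w (y : 'rV[R]_n) : y *m proj U = y -> dotp y w = 0.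
  by move=> <-; rewrite dotp_proj_orth.
have [w0|w_neq0] := eqVneq w 0.
  by exists U => //; split => //; apply/eqP; rewrite eq_sym -subr_eq0 -/w w0.
exists (w :: U); last split.
- split; first split.
  + by move=> u; rewrite inE => /orP[/eqP->|/U0//]; rewrite dotp_eq0.
  + by rewrite pairwise_cons orthU andbT; apply/allP => u /wU; rewrite dotpC => ->.
  + move=> u; rewrite inE => /orP[/eqP->|/Un//].
    by rewrite ww; apply: rational_residue.
  + move=> c u cC; rewrite inE => /orP[/eqP->|/UC]; last exact.
    exact: rational_residue.
- by rewrite proj_cons -ww mulfV ?dotp_eq0 // scale1r subrK.
- by move=> y yU; rewrite proj_cons fixed_w // mul0r scale0r add0r.
Qed.

Lemma gram_schmidt (L : seq 'rV[R]_n) : {subset L <= C} ->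
  exists2 U, rational_basis_for U & {in L, forall y, y *m proj U = y}.
Proof.
elim: L => [|x L IHL] LC.
  by exists [::] => //; split => //; split => //; rewrite pairwise_nil.
have [|U UQ LU] := IHL; first by move=> y yL; rewrite LC // inE yL orbT.
have [U' U'Q [xU' UU']] := gram_schmidt_step UQ (LC x (mem_head _ _)).
by exists U' => // y; rewrite inE => /orP[/eqP->|/LU/UU'].
Qed.

End GramSchmidt.

Lemma row_full_fixed_mx (R : realType) (n : nat) (C : seq 'rV[R]_n)
    (P : 'M[R]_n) :
  spans C -> {in C, forall c, c *m P = c} -> P = 1%:M.
Proof.
move=> /row_fullP [B BC] CP; set A := \matrix_(i < size C) nth 0 C i.
have AP : A *m P = A.
  by apply/row_matrixP => i; rewrite row_mul !rowK CP // mem_nth.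
by rewrite -[P]mul1mx -BC -mulmxA AP.
Qed.

Lemma gram_rows (R : realType) (n : nat) (F : seq 'rV[R]_n) :
  let A := \matrix_(i < size F) nth 0 F i in
  A^T *m A = \sum_(f <- F) f^T *m f.
Proof.
move=> A; apply/matrixP => a b; rewrite !mxE summxE (big_nth 0) big_mkord.
by apply: eq_bigr => i _; rewrite !mxE big_ord1 !mxE.
Qed.

Lemma proj_gram_decomposition (R : realType) (n t : nat) (U : seq 'rV[R]_n) :
  (0 < t)%N -> {in U, forall u, dotp u u != 0} ->
  {in U, forall u, exists k : nat, k%:R = dotp u u * t%:R ^+ 2} ->
  exists2 F : seq 'rV[R]_n, \sum_(f <- F) f^T *m f = proj U &
    {in F, forall f, exists2 u, u \in U & f = (dotp u u * t%:R)^-1 *: u}.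
Proof.
move=> t0; elim: U => [|u U IHU] U0 Uk; first by exists [::] => //; rewrite /proj !big_nil.
have [||F FU UF] := IHU.
- by move=> v vU; rewrite U0 // inE vU orbT.
- by move=> v vU; apply: Uk; rewrite inE vU orbT.
have [k kE] := Uk u (mem_head _ _).
have u0 := U0 u (mem_head _ _).
have t_neq0 : (t%:R : R) != 0 by rewrite pnatr_eq0 -lt0n.
exists (nseq k ((dotp u u * t%:R)^-1 *: u) ++ F).
  rewrite big_cat big_nseq FU /proj big_cons; congr (_ + _).
  rewrite iter_addr_0 !linearZ /= -scalemxAl scalerA -scaler_nat scalerA kE.
  by congr (_ *: _); field; apply/andP.
move=> f; rewrite mem_cat => /orP[/nseqP[-> _]|fF]; first by exists u; rewrite ?mem_head.
by have [v vU ->] := UF f fF; exists v => //; rewrite inE vU orbT.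
Qed.

Lemma rational_isometric_embedding (R : realType) (n : nat) (C : seq 'rV[R]_n) :
  {in C &, forall x y, is_rational (dotp x y)} -> spans C ->
  exists q (M : 'M[R]_(n, q)), [/\ (n <= q)%N, M *m M^T = 1%:M &
    {in C, forall x j, is_rational ((x *m M) 0 j)}].
Proof.
move=> gramC spC.
have [U [[U0 _] Un UC] CU] := gram_schmidt gramC (fun _ xC => xC).
have projU : proj U = 1%:M := row_full_fixed_mx spC CU.
have [|t t0 tU] := rational_common_denominator (S := [seq dotp u u | u <- U]).
  by move=> a /mapP[u uU ->]; apply: Un.
have Uk : {in U, forall u, exists k : nat, k%:R = dotp u u * t%:R ^+ 2}.
  move=> u uU; have [z tz] := tU _ (map_f _ uU).
  have z0 : 0 <= z by rewrite -(ler0z R) -tz mulr_ge0 ?dotp_ge0.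
  by exists (`|z|%N * t)%N; rewrite natrM natr_absz ger0_norm // -tz; ring.
have [F FU UF] := proj_gram_decomposition t0 U0 Uk.
set A := \matrix_(i < size F) nth 0 F i.
have coordA x (k : 'I_(size F)) : (x *m A^T) 0 k = dotp x (nth 0 F k).
  by rewrite dotpE mxE; apply: eq_bigr => i _; rewrite !mxE.
(* The zero block only serves to guarantee n <= q. *)
exists (n + size F)%N, (row_mx 0 A^T); split; first exact: leq_addr.
  by rewrite tr_row_mx mul_row_col mul0mx add0r trmxK gram_rows FU projU.
move=> x xC j; rewrite mul_mx_row mulmx0 -(splitK j).
case: (split j) => k /=; first by rewrite row_mxEl mxE; exact: (rational_nat R 0).
rewrite row_mxEr coordA; have [u uU ->] := UF _ (mem_nth 0 (ltn_ord k)).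
rewrite dotpZr; apply: rationalM; last exact: UC.
by apply/rationalV/rationalM; [exact: Un | exact: rational_nat].
Qed.

Lemma in_shell_intmx (R : realType) (q m : nat) (w : 'rV[R]_q) :
  (forall j, exists z : int, w 0 j = z%:~R) -> dotp w w = m%:R -> in_shell m w.
Proof.
move=> /fin_all_exists[z wz] wm; exists (\row_j z j); split.
  by apply/rowP => j; rewrite !mxE wz.
apply: (@intr_inj R); rewrite rmorph_sum /= -[RHS]/(m%:R : R) -wm dotpE.
by apply: eq_bigr => j _; rewrite mxE rmorphXn /= -wz expr2.
Qed.

Theorem proposition2 (R : realType) (n : nat) (C : seq 'rV[R]_n) :
  spherical_code C ->
  (forall a, angle_set C a -> is_rational a) ->
  spans C ->
  exists (q m : nat) (lam : R) (M : 'M[R]_(n, q)),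
    [/\ (n <= q)%N, 0 < lam, isometric_embedding M &
        forall x, x \in C -> in_shell m (lam *: (x *m M))].
Proof.
move=> [_ Csph] angC spC.
have gramC : {in C &, forall x y, is_rational (dotp x y)}.
  move=> x y xC yC; have [<-|xy] := eqVneq x y; last by apply: angC; exists x, y.
  by rewrite (Csph x xC); exact: (rational_nat R 1).
have [q [M [nq MMt CM]]] := rational_isometric_embedding gramC spC.
have isoM := isometric_embedding_tr MMt.
have [|D D0 DCM] :=
  rational_common_denominator (S := [seq (x *m M) 0 j | x <- C, j <- enum 'I_q]).
  by move=> a /allpairsP[[x j] [/= xC _ ->]]; apply: CM.
exists q, (D * D)%N, D%:R, M; split => //; first by rewrite ltr0n.
move=> x xC; apply: in_shell_intmx => [j|].
  by rewrite mxE; apply: DCM; apply: allpairs_f; rewrite ?mem_enum.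
by rewrite dotpZl dotpZr isoM (Csph x xC) mulr1 natrM.
Qed.
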